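(* Let $n>1$ and $k>1$ be integers and let $t_1,\ldots,t_k$ be positive divisors of $n$. Consider the family GRDH with parameters $n,k,t_1,\ldots,t_k$. There exists $\varepsilon<1$ such that GRDH is $\varepsilon$-almost-universal if and only if $n$ is odd and $t_1=\cdots=t_k=1$ (i.e., the keys range over $(\mathbb{Z}_n^* )^k$). Moreover, if $n$ is odd and $t_1=\cdots=t_k=1$, then GRDH is $\frac{1}{p-1}$-almost-universal, where $p$ is the smallest prime divisor of $n$, and this bound is tight: there exist distinct $\mathbf{m},\mathbf{m}'\in\mathbb{Z}_n^k$ with $\Pr_{\mathbf{x}}[\Upsilon_{\mathbf{x}}(\mathbf{m})=\Upsilon_{\mathbf{x}}(\mathbf{m}')]=\frac{1}{p-1}$.
   Context: Let $n>1$, $k\ge1$ be integers and $t_1,\ldots,t_k$ positive divisors of $n$. The family GRDH consists of the functions $\Upsilon_{\mathbf{x}}:\mathbb{Z}_n^k\to\mathbb{Z}_n$, $\Upsilon_{\mathbf{x}}(\mathbf{m})=\sum_{i=1}^k m_ix_i \bmod n$, indexed by keys $\mathbf{x}=\langle x_1,\ldots,x_k\rangle\in\mathbb{Z}_n^k$ satisfying $\gcd(x_i,n)=t_i$ for $1\le i\le k$. When $t_1=\cdots=t_k=1$ (keys in $(\mathbb{Z}_n^* )^k$) the family is called RDH. All probabilities are over a key $\mathbf{x}$ chosen uniformly at random from the set of admissible keys. The family is $\varepsilon$-almost-universal if for all distinct $\mathbf{m},\mathbf{m}'\in\mathbb{Z}_n^k$, $\Pr_{\mathbf{x}}[\Upsilon_{\mathbf{x}}(\mathbf{m})=\Upsilon_{\mathbf{x}}(\mathbf{m}')]\le\varepsilon$.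 *)

From HB Require Import structures.
From mathcomp Require Import all_boot all_order all_algebra.
Set Implicit Arguments. Unset Strict Implicit. Unset Printing Implicit Defensive.
Import Order.TTheory GRing.Theory Num.Theory.

(* Elements of Z_n are represented by 'I_n = {0,..,n-1}; vectors in Z_n^k by
   finite functions 'I_k -> 'I_n.  The divisor parameters t_1..t_k are t : 'I_k -> nat. *)

Definition key_set (n k : nat) (t : 'I_k -> nat) : {set {ffun 'I_k -> 'I_n}} :=
  [set x : {ffun 'I_k -> 'I_n} | [forall i, gcdn (x i) n == t i]].

Definition Ups (n k : nat) (x m : {ffun 'I_k -> 'I_n}) : nat :=
  (\sum_(i < k) (m i : nat) * (x i : nat)) %% n.

Definition coll_prob (n k : nat) (t : 'I_k -> nat) (m m' : {ffun 'I_k -> 'I_n}) : rat :=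
  (#|[set x in @key_set n k t | @Ups n k x m == @Ups n k x m']|%:R / #|@key_set n k t|%:R)%R.

Definition almost_universal (n k : nat) (t : 'I_k -> nat) (eps : rat) : Prop :=
  forall m m' : {ffun 'I_k -> 'I_n}, m != m' -> (@coll_prob n k t m m' <= eps)%R.

From HB Require Import structures.
From mathcomp Require Import all_boot all_order all_algebra.
From mathcomp Require Import zify.
Import Order.TTheory GRing.Theory Num.Theory.
Set Implicit Arguments. Unset Strict Implicit.

(* For m <> m' pick a coordinate i with m_i <> m'_i.  Two colliding unit keys
   that agree off i satisfy (m_i - m'_i)(x_i - y_i) = 0 mod n, so x_i is fixed
   modulo a prime q dividing n.  Multiplying x_i by units of Z_n lying over the
   q - 1 nonzero residues mod q then maps the collision set injectively into
   the key set, which bounds the collision probability by 1/(q-1) <= 1/(p-1).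
   Equality is attained by m = (n/p) e_1, m' = (n/p) e_2, whose collision set
   is one of the p - 1 equally large classes {x | x_1 = r x_2 mod p}.
   Conversely, a key coordinate with gcd t_i > 1 is killed by m = (n/t_i) e_i,
   and for even n every unit is odd, so (n/2)(e_1 + e_2) collides with 0. *)

Lemma eqn_modMl_div_gcd n c x y : 0 < n ->
  c * x = c * y %[mod n] -> x = y %[mod n %/ gcdn c n].
Proof.
move=> n_gt0; wlog le_xy : x y / x <= y.
  move=> IH; case/orP: (leq_total x y) => [/IH //|le_yx /esym Eyx].
  exact/esym/IH.
set g := gcdn c n; have g_gt0 : 0 < g by rewrite gcdn_gt0 n_gt0 orbT.
have Dc : c = g * (c %/ g) by rewrite mulnC divnK ?dvdn_gcdl.
have Dn : n = g * (n %/ g) by rewrite mulnC divnK ?dvdn_gcdr.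
have co_cn : coprime (c %/ g) (n %/ g).
  by rewrite /coprime -(eqn_pmul2l g_gt0) muln_gcdr -Dc -Dn muln1.
move/eqP; rewrite eq_sym eqn_mod_dvd ?leq_mul2l ?le_xy ?orbT // => dvd_n.
apply/eqP; rewrite eq_sym eqn_mod_dvd //.
move: dvd_n; rewrite -mulnBr {1}Dn {1}Dc -mulnA dvdn_pmul2l //.
by rewrite Gauss_dvdr // coprime_sym.
Qed.

Lemma eqn_modMl_coprime n c x y : coprime c n ->
  c * x = c * y %[mod n] -> x = y %[mod n].
Proof.
case: n => [|n] co_cn.
  by move: co_cn; rewrite /coprime gcdn0 => /eqP ->; rewrite !mul1n.
by move/eqn_modMl_div_gcd; rewrite (eqP co_cn) divn1; apply.
Qed.

Lemma div_gcdn_gt1 c n : 0 < c < n -> 1 < n %/ gcdn c n.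
Proof.
case/andP=> c_gt0 lt_cn; rewrite ltn_divRL ?dvdn_gcdr // mul1n.
exact: leq_ltn_trans (dvdn_leq c_gt0 (dvdn_gcdl c n)) lt_cn.
Qed.

Lemma eqn_mod_cross n a b x y : b < a ->
  a * x + b * y = b * x + a * y %[mod n] -> (a - b) * x = (a - b) * y %[mod n].
Proof.
move=> lt_ba /eqP E; apply/eqP; rewrite -(eqn_modDr (b * x + b * y)).
have Da : a = (a - b) + b by rewrite subnK // ltnW.
have -> : (a - b) * x + (b * x + b * y) = a * x + b * y.
  by rewrite {2}Da mulnDl addnA.
have -> : (a - b) * y + (b * x + b * y) = b * x + a * y.
  by rewrite {2}Da mulnDl addnCA.
exact: E.
Qed.

Lemma coprime_lift n q r : 0 < n -> prime q -> q %| n -> coprime r q ->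
  {u | coprime u n & u = r %[mod q]}.
Proof.
move=> n_gt0 q_pr q_dvd co_rq; have [m co_qm Dn] := pfactor_coprime q_pr n_gt0.
exists (chinese q m r 1); last exact: chinese_modl.
rewrite Dn coprimeMr; apply/andP; split.
  by rewrite -coprime_modl chinese_modr // coprime_modl coprime1n.
by apply: coprimeXr; rewrite -coprime_modl chinese_modl // coprime_modl.
Qed.

Definition unit_keys (n k : nat) : {set {ffun 'I_k -> 'I_n}} :=
  [set x : {ffun 'I_k -> 'I_n} | [forall j, coprime (x j) n]].

Lemma key_set_units n k (t : 'I_k -> nat) :
  (forall i, t i = 1) -> key_set n t = unit_keys n k.
Proof.
by move=> t1; apply/setP => x; rewrite !inE; apply: eq_forallb => j; rewrite t1.
Qed.

Lemma key_set_gt0 n k (t : 'I_k -> nat) :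
  0 < n -> (forall i, 0 < t i /\ t i %| n) -> 0 < #|key_set n t|.
Proof.
move=> n_gt0 t_dvd; apply/card_gt0P.
exists [ffun j => Ordinal (ltn_pmod (t j) n_gt0)].
rewrite inE; apply/forallP => j; rewrite ffunE /= gcdn_modl; apply/eqP/gcdn_idPl.
by case: (t_dvd j).
Qed.

Definition rigid_at (n k q : nat) (i : 'I_k) (C : {set {ffun 'I_k -> 'I_n}}) :=
  forall x y : {ffun 'I_k -> 'I_n}, x \in C -> y \in C ->
    (forall j, j != i -> x j = y j) -> x i = y i %[mod q].

Lemma rigid_at_dvd n k q d (i : 'I_k) (C : {set {ffun 'I_k -> 'I_n}}) :
  q %| d -> rigid_at d i C -> rigid_at q i C.
Proof.
move=> q_dvd rigidC x y xC yC /(rigidC x y xC yC) Exy.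
by rewrite -(modn_dvdm (x i) q_dvd) Exy modn_dvdm.
Qed.

Section RigidBound.

Variables (n k q : nat) (i : 'I_k).
Hypotheses (n_gt0 : 0 < n) (q_prime : prime q) (q_dvd_n : q %| n).

Definition scale_at (u : nat) (x : {ffun 'I_k -> 'I_n}) : {ffun 'I_k -> 'I_n} :=
  [ffun j => if j == i then Ordinal (ltn_pmod (x i * u) n_gt0) else x j].

Lemma scale_at_unit u x :
  coprime u n -> x \in unit_keys n k -> scale_at u x \in unit_keys n k.
Proof.
move=> co_un; rewrite !inE => /forallP co_x; apply/forallP => j; rewrite ffunE.
by case: eqP => // _; rewrite /= coprime_modl coprimeMl co_x.
Qed.

Let succ_ord_lt (r : 'I_q.-1) : r.+1 < q.
Proof. by rewrite -[q in _ < q](prednK (prime_gt0 q_prime)) ltnS. Qed.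

Let coprime_succ_ord (r : 'I_q.-1) : coprime r.+1 q.
Proof.
rewrite coprime_sym prime_coprime //; apply/negP => /(dvdn_leq (ltn0Sn r)).
by rewrite leqNgt succ_ord_lt.
Qed.

Let lift (r : 'I_q.-1) :=
  s2val (coprime_lift n_gt0 q_prime q_dvd_n (coprime_succ_ord r)).

Let coprime_lift_n r : coprime (lift r) n.
Proof. exact: (s2valP (coprime_lift _ _ _ _)). Qed.

Let lift_mod_q r : lift r = r.+1 %[mod q].
Proof. exact: (s2valP' (coprime_lift _ _ _ _)). Qed.

Lemma card_rigid_le (C : {set {ffun 'I_k -> 'I_n}}) :
  C \subset unit_keys n k -> rigid_at q i C -> #|C| * q.-1 <= #|unit_keys n k|.
Proof.
move=> sub_CK rigidC; pose f (z : _ * 'I_q.-1) := scale_at (lift z.2) z.1.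
have f_inj : {in setX C [set: 'I_q.-1] &, injective f}.
  move=> [x r] [y s] /setXP[xC _] /setXP[yC _] /= /ffunP Efxy.
  have Exy j : j != i -> x j = y j.
    by move=> ji; have := Efxy j; rewrite !ffunE (negbTE ji).
  have Efxy_i : x i * lift r = y i * lift s %[mod n].
    by have := congr1 val (Efxy i); rewrite !ffunE eqxx.
  have co_xq : coprime (x i) q.
    by have := subsetP sub_CK x xC; rewrite inE => /forallP/(_ i)/coprime_dvdr->.
  have Ers : r = s.
    apply/val_inj/succn_inj.
    rewrite -(modn_small (succ_ord_lt r)) -(modn_small (succ_ord_lt s)).
    apply: (eqn_modMl_coprime co_xq).
    rewrite -modnMmr -lift_mod_q modnMmr -(modn_dvdm _ q_dvd_n) Efxy_i modn_dvdm //.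
    by rewrite -modnMml -(rigidC x y xC yC Exy) modnMml -modnMmr lift_mod_q modnMmr.
  subst s; congr (_, _); apply/ffunP => j.
  case: (eqVneq j i) => [->|]; last exact: Exy.
  apply/val_inj => /=.
  rewrite -(modn_small (ltn_ord (x i))) -(modn_small (ltn_ord (y i))).
  by apply: (eqn_modMl_coprime (coprime_lift_n r)); rewrite mulnC Efxy_i mulnC.
rewrite -[q.-1]card_ord -cardsT -cardsX -(card_in_imset f_inj).
apply/subset_leq_card/subsetP => _ /imsetP[[x r] /setXP[xC _] ->].
exact/scale_at_unit/(subsetP sub_CK).
Qed.

End RigidBound.

Definition collisions n k (t : 'I_k -> nat) (m m' : {ffun 'I_k -> 'I_n}) :=
  [set x in key_set n t | Ups x m == Ups x m'].

Lemma collisionsC n k (t : 'I_k -> nat) (m m' : {ffun 'I_k -> 'I_n}) :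
  collisions t m m' = collisions t m' m.
Proof. by apply/setP => x; rewrite !inE eq_sym. Qed.

Lemma Ups_bigD1 n k (i : 'I_k) (x m : {ffun 'I_k -> 'I_n}) :
  Ups x m = (m i * x i + \sum_(j < k | j != i) m j * x j) %% n.
Proof. by rewrite /Ups (bigD1 i). Qed.

Lemma collisions_rigid n k (t : 'I_k -> nat) (m m' : {ffun 'I_k -> 'I_n}) i :
  0 < n -> m' i < m i -> rigid_at (n %/ gcdn (m i - m' i) n) i (collisions t m m').
Proof.
move=> n_gt0 lt_m'm x y; rewrite !inE => /andP[_ /eqP Ex] /andP[_ /eqP Ey] Exy.
apply: (eqn_modMl_div_gcd n_gt0); apply: (eqn_mod_cross lt_m'm).
move: Ex Ey; rewrite !(Ups_bigD1 i).
set S := \sum_(j | j != i) m j * x j; set S' := \sum_(j | j != i) m' j * x j.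
have -> : \sum_(j | j != i) m j * y j = S by apply: eq_bigr => j /Exy ->.
have -> : \sum_(j | j != i) m' j * y j = S' by apply: eq_bigr => j /Exy ->.
move=> Ex Ey; apply/eqP; rewrite -(eqn_modDr (S + S')); apply/eqP.
have -> : m i * x i + m' i * y i + (S + S') =
          (m i * x i + S) + (m' i * y i + S') by rewrite addnACA.
have -> : m' i * x i + m i * y i + (S + S') =
          (m' i * x i + S') + (m i * y i + S).
  by rewrite [S + S']addnC addnACA.
by rewrite -modnDm Ex -Ey modnDm.
Qed.

Lemma card_collisions_le n k (t : 'I_k -> nat) (m m' : {ffun 'I_k -> 'I_n}) :
  0 < n -> (forall i, t i = 1) -> m != m' ->
  exists2 q, prime q & q %| n /\ #|collisions t m m'| * q.-1 <= #|key_set n t|.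
Proof.
move=> n_gt0 t1 ne_mm'; have [i ne_mm'_i] : exists i, m i != m' i.
  apply/existsP; apply: contraNT ne_mm' => /existsPn eq_mm'.
  by apply/eqP/ffunP => j; apply/eqP/negPn/eq_mm'.
wlog lt_mm'_i : m m' {ne_mm'} ne_mm'_i / m' i < m i.
  move=> IH; case: (ltngtP (m' i) (m i)) => [|lt_m'm|/val_inj Emm'].
  - exact: IH.
  - by rewrite collisionsC; apply: IH; rewrite // eq_sym.
  - by rewrite Emm' eqxx in ne_mm'_i.
set d := n %/ gcdn (m i - m' i) n.
have d_gt1 : 1 < d.
  by apply: div_gcdn_gt1; rewrite subn_gt0 lt_mm'_i (leq_ltn_trans (leq_subr _ _)).
have q_dvd_n : pdiv d %| n := dvdn_trans (pdiv_dvd d) (dvdn_div (dvdn_gcdr _ _)).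
exists (pdiv d); first exact: pdiv_prime.
split=> //; rewrite key_set_units //; apply: (card_rigid_le (i := i)) => //.
- exact: pdiv_prime.
- by apply/subsetP => x; rewrite inE key_set_units // => /andP[].
- exact/(rigid_at_dvd (pdiv_dvd d))/collisions_rigid.
Qed.

Lemma coll_prob_le_inv n k (t : 'I_k -> nat) (m m' : {ffun 'I_k -> 'I_n}) q :
  0 < #|key_set n t| -> 1 < q -> #|collisions t m m'| * q.-1 <= #|key_set n t| ->
  (coll_prob t m m' <= q.-1%:R^-1)%R.
Proof.
move=> K_gt0 q_gt1 le_card; rewrite /coll_prob ler_pdivrMr ?ltr0n // mulrC.
by rewrite ler_pdivlMr ?ltr0n -?natrM ?ler_nat // -ltnS prednK ?(ltnW q_gt1).
Qed.

Lemma almost_universal_pdiv n k (t : 'I_k -> nat) : 1 < n -> (forall i, t i = 1) ->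
  almost_universal n t (pdiv n).-1%:R^-1.
Proof.
move=> n_gt1 t1 m m' ne_mm'; have n_gt0 := ltnW n_gt1.
have [q q_pr [q_dvd_n le_card]] := card_collisions_le n_gt0 t1 ne_mm'.
apply: le_trans (coll_prob_le_inv _ (prime_gt1 q_pr) le_card) _.
  by apply: key_set_gt0 => // i; rewrite t1.
have pred_gt0 r : 1 < r -> (0 < r.-1%:R :> rat)%R by case: r => [|[]].
rewrite lef_pV2 ?posrE ?pred_gt0 ?prime_gt1 ?pdiv_prime //.
rewrite ler_nat -!subn1 leq_sub2r //.
exact: pdiv_min_dvd (prime_gt1 q_pr) q_dvd_n.
Qed.

Lemma eq_card_of_mean n (I : finType) (A : {pred I}) (F : I -> nat) :
  (forall r, r \in A -> F r * #|A| <= n) -> \sum_(r in A) F r = n ->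
  forall r, r \in A -> F r * #|A| = n.
Proof.
move=> le_Fn sumF r Ar; apply/eqP; rewrite eqn_leq le_Fn //= -subn_eq0.
have : \sum_(s in A) (n - F s * #|A|) == 0.
  by rewrite sumnB // sum_nat_const -big_distrl /= sumF mulnC subnn.
by rewrite sum_nat_eq0 => /forallP/(_ r)/implyP/(_ Ar).
Qed.

Section RatioClasses.

Variables (n k p : nat) (i0 i1 : 'I_k).
Hypotheses (n_gt0 : 0 < n) (p_prime : prime p) (p_dvd_n : p %| n).
Hypothesis ne_i01 : i0 != i1.

Definition ratio_class (r : nat) : {set {ffun 'I_k -> 'I_n}} :=
  [set x in unit_keys n k | x i0 == r * x i1 %[mod p]].

Let unit_coprime_p x j : x \in unit_keys n k -> coprime (x j) p.
Proof. by rewrite inE => /forallP/(_ j)/coprime_dvdr->. Qed.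

Lemma card_ratio_class_le r : coprime r p ->
  #|ratio_class r| * p.-1 <= #|unit_keys n k|.
Proof.
move=> co_rp; apply: (card_rigid_le (i := i1)) => //.
  by apply/subsetP => x; rewrite inE => /andP[].
move=> x y; rewrite !inE => /andP[_ /eqP Ex] /andP[_ /eqP Ey] Exy.
by apply: (eqn_modMl_coprime co_rp); rewrite -Ex -Ey Exy // eq_sym.
Qed.

Lemma ratio_class0 : ratio_class 0 = set0.
Proof.
apply/setP => x; rewrite in_set0 inE mul0n mod0n.
apply/negP => /andP[Kx /eqP x0_dvd].
by have := unit_coprime_p i0 Kx; rewrite coprime_sym prime_coprime // /dvdn x0_dvd.
Qed.

Lemma sum_card_ratio_class : \sum_(r < p) #|ratio_class r| = #|unit_keys n k|.
Proof.
have p_gt0 := prime_gt0 p_prime.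
transitivity (\sum_(r < p) \sum_(x in unit_keys n k)
                 (if x i0 == r * x i1 %[mod p] then 1 else 0)).
  apply: eq_bigr => r _; rewrite -sum1_card -big_mkcondr.
  by apply: eq_bigl => x; rewrite inE.
rewrite exchange_big /= -sum1_card; apply: eq_bigr => x Kx.
pose g (r : 'I_p) : 'I_p := Ordinal (ltn_pmod (r * x i1) p_gt0).
have g_inj : injective g.
  move=> r s /(congr1 val) /= Ers; apply/val_inj => /=.
  rewrite -(modn_small (ltn_ord r)) -(modn_small (ltn_ord s)).
  by apply: (eqn_modMl_coprime (unit_coprime_p i1 Kx)); rewrite mulnC Ers mulnC.
pose a : 'I_p := Ordinal (ltn_pmod (x i0) p_gt0).
rewrite -big_mkcond sum1_card -(cards1 a) -(card_preimset _ g_inj).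
by apply: eq_card => r; rewrite !inE -val_eqE eq_sym.
Qed.

(* The classes with r = 1, ..., p - 1 partition the unit keys and none exceeds
   the average size, so they all have exactly the average size. *)
Lemma card_ratio_class1 : #|ratio_class 1| * p.-1 = #|unit_keys n k|.
Proof.
have [p_gt0 p_gt1] := (prime_gt0 p_prime, prime_gt1 p_prime).
pose r0 : 'I_p := Ordinal p_gt0; pose r1 : 'I_p := Ordinal p_gt1.
have card_A : #|predC1 r0| = p.-1 by rewrite cardC1 card_ord.
rewrite -card_A.
apply: (@eq_card_of_mean _ _ _ (fun r : 'I_p => #|ratio_class r|) _ _ r1).
- move=> r; rewrite !inE card_A => ne_r0; apply: card_ratio_class_le.
  have r_gt0 : 0 < r.
    by rewrite lt0n; apply: contra ne_r0 => /eqP r_eq0; apply/eqP/val_inj.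
  by rewrite coprime_sym prime_coprime // gtnNdvd.
- rewrite -sum_card_ratio_class [RHS](bigD1 r0) //.
  by rewrite [ratio_class r0]ratio_class0 cards0.
- by rewrite !inE.
Qed.

End RatioClasses.

(* The zero of ['I_n] is built from [c], which shows that ['I_n] is inhabited. *)
Definition mask_vec n k (A : pred 'I_k) (c : 'I_n) : {ffun 'I_k -> 'I_n} :=
  [ffun j => if A j then c else Ordinal (leq_ltn_trans (leq0n c) (ltn_ord c))].

Lemma Ups_mask_vec n k (A : pred 'I_k) (c : 'I_n) (x : {ffun 'I_k -> 'I_n}) :
  Ups x (mask_vec A c) = (c * \sum_(j | A j) x j) %% n.
Proof.
rewrite /Ups big_distrr /= [X in _ = X %% n]big_mkcond; congr (_ %% _).
by apply: eq_bigr => j _; rewrite ffunE; case: (A j).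
Qed.

Lemma mask_vec_neq n k (A B : pred 'I_k) (c : 'I_n) j :
  0 < c -> A j != B j -> mask_vec A c != mask_vec B c.
Proof.
move=> c_gt0 neAB; apply: contraNneq neAB => /ffunP/(_ j); rewrite !ffunE.
by case: (A j); case: (B j) => // /(congr1 val) /=; lia.
Qed.

Lemma coll_prob_eq1 n k (t : 'I_k -> nat) (m m' : {ffun 'I_k -> 'I_n}) :
  0 < #|key_set n t| -> {in key_set n t, forall x, Ups x m = Ups x m'} ->
  coll_prob t m m' = 1%R.
Proof.
move=> K_gt0 collide; rewrite /coll_prob -/(collisions t m m').
have -> : collisions t m m' = key_set n t.
  apply/setP => x; rewrite [LHS]in_set; case: (boolP (x \in key_set n t)) => // Kx.
  by rewrite collide // eqxx.
by rewrite divff // pnatr_eq0 -lt0n.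
Qed.

Lemma coll_prob_neq1 n k (t : 'I_k -> nat) eps (m m' : {ffun 'I_k -> 'I_n}) :
  almost_universal n t eps -> (eps < 1)%R -> m != m' -> coll_prob t m m' != 1%R.
Proof.
move=> AU eps_lt1 /AU le_eps.
by apply: contra_ltN (le_lt_trans le_eps eps_lt1) => /eqP->.
Qed.

Lemma non_unit_key_collision n k (t : 'I_k -> nat) i : 0 < n ->
  (forall i, 0 < t i /\ t i %| n) -> t i != 1 ->
  exists m m' : {ffun 'I_k -> 'I_n}, m != m' /\ coll_prob t m m' = 1%R.
Proof.
move=> n_gt0 t_dvd ti_neq1; have [ti_gt0 ti_dvd] := t_dvd i.
have ti_gt1 : 1 < t i by rewrite ltn_neqAle eq_sym ti_neq1.
pose c : 'I_n := Ordinal (ltn_Pdiv ti_gt1 n_gt0).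
have c_gt0 : 0 < c by rewrite divn_gt0 // dvdn_leq.
exists (mask_vec (pred1 i) c), (mask_vec pred0 c); split.
  by apply: (mask_vec_neq (j := i)); rewrite //= eqxx.
apply: coll_prob_eq1 => [|x]; first exact: key_set_gt0.
rewrite inE => /forallP/(_ i)/eqP xi_gcd.
rewrite !Ups_mask_vec big_pred1_eq big_pred0_eq muln0 mod0n.
have /dvdnP[w ->] : t i %| x i by rewrite -xi_gcd dvdn_gcdl.
by rewrite /= mulnCA divnK // modnMl.
Qed.

Lemma even_modulus_collision n k (t : 'I_k -> nat) (i0 i1 : 'I_k) :
  (forall i, t i = 1) -> 1 < n -> ~~ odd n -> i0 != i1 ->
  exists m m' : {ffun 'I_k -> 'I_n}, m != m' /\ coll_prob t m m' = 1%R.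
Proof.
move=> t1 n_gt1 n_even ne_i01; have n_gt0 := ltnW n_gt1.
have two_dvd_n : 2 %| n by rewrite dvdn2.
pose c : 'I_n := Ordinal (ltn_Pdiv (isT : 1 < 2) n_gt0).
have c_gt0 : 0 < c by rewrite divn_gt0.
exists (mask_vec (pred2 i0 i1) c), (mask_vec pred0 c); split.
  by apply: (mask_vec_neq (j := i0)); rewrite //= eqxx.
apply: coll_prob_eq1 => [|x]; first by apply: key_set_gt0 => // i; rewrite t1.
rewrite key_set_units // inE => /forallP co_x.
have odd_x j : odd (x j) by rewrite -coprimen2 (coprime_dvdr two_dvd_n).
rewrite !Ups_mask_vec big_pred0_eq muln0 mod0n.
have -> : \sum_(j | pred2 i0 i1 j) x j = x i0 + x i1.
  rewrite (bigD1 i0) /= ?eqxx // (bigD1 i1) /= ?eqxx ?orbT 1?eq_sym //.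
  rewrite big_pred0 ?addn0 //.
  by move=> j; case: (j == i0); case: (j == i1).
have /dvdnP[w ->] : 2 %| x i0 + x i1 by rewrite dvdn2 oddD !odd_x.
by rewrite /= mulnCA divnK // modnMl.
Qed.

Lemma coll_prob_tight n k (t : 'I_k -> nat) (i0 i1 : 'I_k) :
  (forall i, t i = 1) -> 1 < n -> i0 != i1 ->
  exists m m' : {ffun 'I_k -> 'I_n},
    m != m' /\ coll_prob t m m' = ((pdiv n).-1%:R^-1)%R.
Proof.
move=> t1 n_gt1 ne_i01; have n_gt0 := ltnW n_gt1.
set p := pdiv n; have p_pr : prime p := pdiv_prime n_gt1.
have p_dvd_n : p %| n := pdiv_dvd n.
pose c : 'I_n := Ordinal (ltn_Pdiv (prime_gt1 p_pr) n_gt0).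
have c_gt0 : 0 < c by rewrite /= divn_gt0 ?(prime_gt0 p_pr) // dvdn_leq.
exists (mask_vec (pred1 i0) c), (mask_vec (pred1 i1) c); split.
  by apply: (mask_vec_neq (j := i0)); rewrite //= eqxx eq_sym (negbTE ne_i01).
have coll_ratio : collisions t (mask_vec (pred1 i0) c) (mask_vec (pred1 i1) c)
                  = ratio_class n p i0 i1 1.
  apply/setP => x; rewrite /collisions key_set_units // !in_set; congr (_ && _).
  rewrite !Ups_mask_vec !big_pred1_eq mul1n.
  have Dn : c * p = n := divnK p_dvd_n.
  by rewrite -[X in _ %% X == _]Dn -[X in _ == _ %% X]Dn -!muln_modr eqn_pmul2l.
have card1 := card_ratio_class1 n_gt0 p_pr p_dvd_n ne_i01.
have K_gt0 : 0 < #|unit_keys n k|.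
  by rewrite -(key_set_units n t1) key_set_gt0 // => i; rewrite t1.
rewrite /coll_prob -/(collisions _ _ _) coll_ratio key_set_units // -card1.
rewrite natrM invfM mulrA mulfV ?mul1r // pnatr_eq0 -lt0n.
by move: K_gt0; rewrite -card1 muln_gt0 => /andP[].
Qed.

Unset Implicit Arguments. Set Strict Implicit.

Theorem mainTheorem2 (n k : nat) (t : 'I_k -> nat) :
  1 < n -> 1 < k -> (forall i, 0 < t i /\ t i %| n) ->
  ((exists eps : rat, (eps < 1)%R /\ @almost_universal n k t eps)
      <-> (odd n /\ forall i, t i = 1))
  /\ (odd n -> (forall i, t i = 1) ->
      @almost_universal n k t (((pdiv n).-1)%:R^-1)%R
      /\ exists m m' : {ffun 'I_k -> 'I_n},
           m != m' /\ @coll_prob n k t m m' = (((pdiv n).-1)%:R^-1)%R).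
Proof.
move=> n_gt1 k_gt1 t_dvd; have n_gt0 := ltnW n_gt1.
pose i0 : 'I_k := Ordinal (ltnW k_gt1); pose i1 : 'I_k := Ordinal k_gt1.
have ne_i01 : i0 != i1 by [].
split; last by move=> _ t1; split;
  [exact: almost_universal_pdiv n_gt1 t1 | exact: coll_prob_tight t1 n_gt1 ne_i01].
split=> [[eps [eps_lt1 AU]] | [odd_n t1]].
  have no_sure_collision :
      ~ exists m m' : {ffun 'I_k -> 'I_n}, m != m' /\ coll_prob t m m' = 1%R.
    case=> m [m' [/(coll_prob_neq1 AU eps_lt1) Pm_neq1 Pm1]].
    by rewrite Pm1 eqxx in Pm_neq1.
  have t1 i : t i = 1.
    case: (eqVneq (t i) 1) => // /(non_unit_key_collision n_gt0 t_dvd).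
    by move/no_sure_collision.
  split=> //; apply/negPn/negP => /(even_modulus_collision t1 n_gt1)/(_ ne_i01).
  by move/no_sure_collision.
exists ((pdiv n).-1%:R^-1)%R; split; last exact: almost_universal_pdiv.
have p_gt2 : 2 < pdiv n.
  rewrite ltn_neqAle prime_gt1 ?pdiv_prime // andbT eq_sym.
  by apply: contraL odd_n => /eqP p2; rewrite -dvdn2 -p2 pdiv_dvd.
by rewrite invf_lt1 ?ltr0n ?ltr1n; lia.
Qed.
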